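(* Let $k\geq2$, $n$, $r$ be positive integers with $n<r<\frac{(k-1)(2n)}{k}$, and let $\mathcal{F}\subseteq\mathcal{H}^r(M_n)$ be $k$-wise intersecting. Let $\sigma$ be a good cyclic ordering such that $|\mathcal{F}_\sigma|=r$ and every member of $\mathcal{F}_\sigma$ contains $\sigma(2n)$. Let $\mu$ be obtained from $\sigma$ by exchanging the entries in positions $n-1$ and $2n-1$. If $|\mathcal{F}_\mu|=r$, then every member of $\mathcal{F}_\mu$ contains $\sigma(2n)$.
   Context: $M_n$ is the graph with vertex set $\{1,\dots,2n\}$ and edges $\{j,n+j\}$, $j\in[n]$; the two endpoints of an edge are partners. $\mathcal{H}^r(M_n)$ is the family of $r$-element vertex sets that are either independent or contain a maximum independent set (i.e. contain one endpoint of every edge). A family is $k$-wise intersecting if any $k$ of its members have nonempty common intersection. A good cyclic ordering is a bijection $\sigma$ from positions $[2n]$ to the vertex set such that for every $j\in[n]$, $\sigma(j)$ and $\sigma(j+n)$ are partners. A $\sigma$-interval of length $r$ is $\{\sigma(x),\sigma(x+1),\dots,\sigma(x+r-1)\}$ for some $x\in[2n]$, indices modulo $2n$; $\mathcal{F}_\sigma$ is the set of members of $\mathcal{F}$ that are $\sigma$-intervals. *)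

From mathcomp Require Import all_boot.
Set Implicit Arguments. Unset Strict Implicit. Unset Printing Implicit Defensive.

(* Conventions: vertex v : 'I_(2*n) stands for the vertex v+1 of M_n, and
   position p : 'I_(2*n) stands for position p+1.  So the edges of M_n are
   {j, j+n} for 0 <= j < n (0-indexed). *)

Definition partners n (u v : 'I_(2 * n)) : bool :=
  (val v == val u + n) || (val u == val v + n).

Definition independent n (S : {set 'I_(2 * n)}) : bool :=
  [forall u in S, forall v in S, ~~ partners u v].

Definition contains_max_indep n (S : {set 'I_(2 * n)}) : bool :=
  [forall j : 'I_(2 * n), (val j < n) ==>
     ((j \in S) || [exists v in S, partners j v])].

Definition Hr (r n : nat) : {set {set 'I_(2 * n)}} :=
  [set S : {set 'I_(2 * n)} | (#|S| == r) && (independent S || contains_max_indep S)].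

(* any k (not necessarily distinct) members have nonempty common intersection *)
Definition kwise_intersecting (T : finType) (k : nat) (F : {set {set T}}) : Prop :=
  forall f : 'I_k -> {set T}, (forall i, f i \in F) -> \bigcap_(i < k) f i != set0.

Definition good_cyclic n (s : 'I_(2 * n) -> 'I_(2 * n)) : Prop :=
  injective s /\
  forall p q : 'I_(2 * n), val p < n -> val q = val p + n -> partners (s p) (s q).

Definition interval n (s : 'I_(2 * n) -> 'I_(2 * n)) (r : nat) (x : 'I_(2 * n))
  : {set 'I_(2 * n)} :=
  [set s p | p : 'I_(2 * n) & [exists i : 'I_r, val p == (val x + val i) %% (2 * n)]].

Definition restrict n (F : {set {set 'I_(2 * n)}}) (s : 'I_(2 * n) -> 'I_(2 * n))
  (r : nat) : {set {set 'I_(2 * n)}} :=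
  [set A in F | [exists x : 'I_(2 * n), A == interval s r x]].

Definition exchange N (T : Type) (s : 'I_N -> T) (a b : nat) : 'I_N -> T :=
  fun p => s (if val p == a then insubd p b else if val p == b then insubd p a else p).

From mathcomp Require Import all_boot perm zify.
Set Implicit Arguments. Unset Strict Implicit. Unset Printing Implicit Defensive.

(* Write N = 2n and m = N - r, so that a sigma-interval of length r is the
   complement of a sigma-block of m consecutive positions.  Counting shows that
   the r members of F_sigma are exactly the r sigma-intervals through the last
   position, so every block avoiding the last position is the complement of a
   member of F.  If some mu-interval starting at a position x1 < m were in F,
   a pairing argument between the low starts [0, m) and the starts
   [n - 1, n - 1 + m) (using that F_mu has r members) produces a second member,
   the mu-interval at some h, whose complementary block is aligned with x1
   modulo m up to one position.  The complements of these two mu-intervals,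
   together with k - 2 blocks placed every m positions, then cover all 2n
   positions because r < (k - 1) m, contradicting k-wise intersection. *)

Definition in_window (N r x p : nat) : bool :=
  if x <= p then p - x < r else p + N - x < r.

Lemma in_window_nowrap N r x p :
  x + r <= N -> p < N -> in_window N r x p = (x <= p < x + r).
Proof. by move=> *; rewrite /in_window; case: (leqP x p) => h; lia. Qed.

Lemma in_window_wrap N r m a p : r + m = N -> a + m < N -> p < N ->
  in_window N r (a + m) p = ~~ (a <= p < a + m).
Proof. by move=> *; rewrite /in_window; case: (leqP (a + m) p) => h; lia. Qed.

Lemma in_window_last N r x : 0 < r -> x < N -> in_window N r x N.-1 = (N - r <= x).
Proof. by move=> *; rewrite /in_window; case: (leqP x N.-1) => h; lia. Qed.

Lemma card_ord_geq N m : #|[set x : 'I_N | m <= x]| = N - m.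
Proof.
rewrite cardsE cardE /enum_mem size_filter -enumT.
rewrite (eq_count (a2 := preim val (leq m))) // -count_map val_enum_ord.
elim: N => // N IH; rewrite -addn1 iotaD count_cat IH /= add0n addn0; lia.
Qed.

Lemma block_cover m r lo c p : lo <= p -> p < lo + c * m -> p < r.-1 + m ->
  has (fun a => a <= p < a + m) [seq minn (lo + j * m) r.-1 | j <- iota 0 c].
Proof.
move=> lo_p p_lt p_top; have m_gt0 : 0 < m.
  by rewrite lt0n; apply/eqP => m0; move: p_lt; rewrite m0 muln0 addn0; lia.
apply/hasP; exists (minn (lo + (p - lo) %/ m * m) r.-1).
  by apply/mapP; exists ((p - lo) %/ m) => //; rewrite mem_iota add0n ltn_divLR //= ltn_subLR.
have := leq_divM (p - lo) m; have := ltn_ceil (p - lo) m_gt0; rewrite mulSn.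
set q := (p - lo) %/ m; rewrite /minn; case: (ltnP (lo + q * m) r.-1); lia.
Qed.

Lemma kwise_intersecting_seq (T : finType) k (F : {set {set T}}) (As : seq {set T}) :
  kwise_intersecting k F -> size As = k -> {subset As <= F} ->
  exists v : T, all (fun A : {set T} => v \in A) As.
Proof.
move=> Fk sizeAs AsF.
have nthF (i : 'I_k) : nth set0 As i \in F by rewrite AsF // mem_nth // sizeAs.
have /set0Pn [v /bigcapP v_in] := Fk (fun i => nth set0 As i) nthF.
exists v; apply/(all_nthP set0) => i ilt.
by rewrite sizeAs in ilt; exact: v_in (Ordinal ilt) isT.
Qed.

Definition res_rep (lo m l : nat) : nat := lo + (l + m - lo %% m) %% m.

Lemma res_rep_bounds lo m l : 0 < m -> lo <= res_rep lo m l < lo + m.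
Proof. by move=> m_gt0; rewrite /res_rep leq_addr ltn_add2l ltn_mod. Qed.

Lemma res_rep_mod lo m l : 0 < m -> res_rep lo m l %% m = l %% m.
Proof.
move=> m_gt0; rewrite /res_rep modnDmr {1}(divn_eq lo m) -addnA subnKC.
  by rewrite modnMDl modnDr.
by rewrite (leq_trans (ltnW (ltn_pmod _ m_gt0))) ?leq_addl.
Qed.

Lemma res_rep_inj lo m l1 l2 : l1 < m -> l2 < m ->
  res_rep lo m l1 = res_rep lo m l2 -> l1 = l2.
Proof.
move=> l1m l2m /(congr1 (modn^~ m)); rewrite !res_rep_mod ?modn_small //; lia.
Qed.

Lemma ex_member_pred_notin m (P : pred nat) :
  ~~ P m.-1 -> (exists2 x, x < m & P x) ->
  exists l, [/\ l < m, P l & ~~ P (if l == 0 then m.-1 else l.-1)].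
Proof.
move=> Pm [x xm Px]; have exP : exists l, (l < m) && P l by exists x; rewrite xm.
case: (ex_minnP exP) => l /andP [lm Pl] l_min; exists l; split=> //.
case: eqP => [// | /eqP l0]; apply/negP => Ppred.
by have := l_min l.-1; rewrite Ppred; lia.
Qed.

(* Each l < m is paired with up l; when l is in S its partner is not, so each
   pair has a point outside S, and the pair of p has two. *)
Lemma pairing_card_compl N m (S : {set 'I_N}) (x0 : 'I_N) (up : nat -> 'I_N) p :
  m <= N -> (forall l, m <= up l) -> {in [pred l | l < m] &, injective up} ->
  p < m -> insubd x0 p \notin S -> up p \notin S ->
  (forall l, l < m -> insubd x0 l \in S -> up l \notin S) ->
  m < #|~: S|.
Proof.
move=> mN up_big up_inj p_lt p_notS up_p_notS up_notS.
pose pos (y : nat) : 'I_N := insubd x0 y.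
have val_pos y : y < m -> pos y = y :> nat by move=> ?; rewrite val_insubd ifT //; lia.
pose g (i : 'I_m.+1) : 'I_N :=
  if i == m :> nat then up p else if pos i \in S then up i else pos i.
have ltm (i : 'I_m.+1) : (i : nat) != m -> i < m by case: i => /= i; lia.
have g_notS i : g i \notin S.
  rewrite /g; case: eqP => // /eqP /ltm im.
  by case: ifP => [/(up_notS _ im) | /negbT].
have g_inj : injective g.
  have up_pos l y : y < m -> up l <> pos y.
    by move=> ym /(congr1 (@nat_of_ord N)); rewrite val_pos //; have := up_big l; lia.
  move=> i j; rewrite /g.
  case: eqP => [im | /eqP /ltm im]; case: eqP => [jm | /eqP /ltm jm].
  - by move=> _; apply: val_inj; rewrite /= im jm.
  - case: ifP => jS e; last by case: (up_pos _ _ jm e).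
    by move: p_notS; rewrite (up_inj p j) ?inE // jS.
  - case: ifP => iS e; last by case: (up_pos _ _ im (esym e)).
    by move: p_notS; rewrite -(up_inj i p) ?inE // iS.
  - case: ifP => _; case: ifP => _ e; apply: val_inj.
    + by apply: up_inj; rewrite ?inE.
    + by case: (up_pos _ _ jm e).
    + by case: (up_pos _ _ im (esym e)).
    + by move/(congr1 (@nat_of_ord N)): e; rewrite !val_pos.
have : g @: [set: 'I_m.+1] \subset ~: S.
  by apply/subsetP => y /imsetP [i _ ->]; rewrite inE g_notS.
by move/subset_leq_card; rewrite card_imset // cardsT card_ord.
Qed.

(* With l0 the least low member of S and p its cyclic predecessor, either some
   low member is aligned with its own representative, or the representative
   of p is aligned with l0, or pairing_card_compl finds m + 1 non-members. *)
Lemma aligned_pair N m h0 (S : {set 'I_N}) :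
  m <= h0 -> h0 + m <= N -> N <= #|S| + m ->
  (forall y : 'I_N, (y : nat) = m.-1 -> y \notin S) ->
  (exists2 x : 'I_N, x \in S & x < m) ->
  exists l h : 'I_N,
    [/\ l \in S, l < m, h \in S, h0 <= h < h0 + m & (h %% m == l) || (h.+1 %% m == l)].
Proof.
move=> m_h0 h0_N card_S last_notS [x xS xm].
have m_gt0 : 0 < m by lia.
pose pos (y : nat) : 'I_N := insubd x y.
have val_pos y : y < N -> pos y = y :> nat by move=> y_lt; rewrite val_insubd y_lt.
pose up (l : nat) : 'I_N := pos (res_rep h0 m l).
have val_up l : up l = res_rep h0 m l :> nat.
  by rewrite val_pos //; have := res_rep_bounds h0 l m_gt0; lia.
have up_bounds l : h0 <= up l < h0 + m by rewrite val_up res_rep_bounds.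
have up_mod l : up l %% m = l %% m by rewrite val_up res_rep_mod.
have last_notS' : pos m.-1 \notin S by apply: last_notS; rewrite val_pos; lia.
have low_S : exists2 y, y < m & pos y \in S by exists x; rewrite // /pos valKd.
have [l0 [l0m l0S p_notS]] := @ex_member_pred_notin m (fun y => pos y \in S) last_notS' low_S.
set p := if l0 == 0 then m.-1 else l0.-1 in p_notS.
have p_lt : p < m by rewrite /p; case: ifP; lia.
have p_next : p.+1 %% m = l0.
  by rewrite /p; case: ifP => l00; [rewrite prednK ?modnn | rewrite prednK ?modn_small]; lia.
case: (boolP [exists l : 'I_N, [&& l \in S, l < m & up l \in S]]).
  case/existsP => l /and3P [lS lm ulS]; exists l, (up l).
  by rewrite up_mod modn_small ?eqxx.
rewrite negb_exists => /forallP up_notS.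
case: (boolP (up p \in S)) => upS.
  exists (pos l0), (up p); rewrite val_pos; last by lia.
  split=> //; apply/orP; right.
  by rewrite -addn1 -modnDml up_mod modnDml addn1 p_next.
have compl_big : m < #|~: S|.
  apply: (pairing_card_compl _ _ _ p_lt p_notS upS); try lia.
  - by move=> l; have := up_bounds l; lia.
  - move=> l1 l2; rewrite !inE => l1m l2m /(congr1 (@nat_of_ord N)).
    by rewrite !val_up; apply: res_rep_inj.
  - by move=> l lm lS; have := up_notS (pos l); rewrite lS val_pos ?lm //; lia.
by rewrite -(leq_add2l #|S|) cardsC card_ord addnS leqNgt ltnS card_S in compl_big.
Qed.

Lemma aligned_decomp h x m : x < m -> m <= h ->
  (h %% m == x) || (h.+1 %% m == x) -> exists2 e, e <= 1 & exists Q, h + e = x + Q.+1 * m.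
Proof.
move=> xm mh /orP [] /eqP hx.
- exists 0 => //; exists (h %/ m).-1; rewrite addn0 prednK; first by rewrite addnC -hx -divn_eq.
  by rewrite divn_gt0; lia.
- exists 1 => //; exists (h.+1 %/ m).-1; rewrite addn1 prednK; first by rewrite addnC -hx -divn_eq.
  by rewrite divn_gt0; lia.
Qed.

Lemma exchange_tperm N T (s : 'I_N -> T) (a b : 'I_N) :
  exchange s a b =1 s \o tperm a b.
Proof. by move=> p; rewrite /exchange /= permE /= !valKd. Qed.

Section Intervals.
Variable n : nat.
Local Notation N := (2 * n).

Definition window r (x : 'I_N) : {set 'I_N} :=
  [set p : 'I_N | [exists i : 'I_r, val p == (x + i) %% N]].

Lemma intervalE s r x : interval s r x = s @: window r x.
Proof. by []. Qed.

Lemma mem_window r x p : r <= N -> (p \in window r x) = in_window N r x p.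
Proof.
move=> hrN; rewrite inE /in_window; have hp := ltn_ord p; have hx := ltn_ord x.
apply/existsP/idP => [[i /eqP hi] | hin].
- have hi' := ltn_ord i; case: (ltnP (x + i) N) => hxi.
  + by rewrite modn_small // in hi; rewrite hi; case: ifP; lia.
  + rewrite -(subnK hxi) modnDr modn_small in hi; last by lia.
    by rewrite hi; case: ifP; lia.
- move: hin; case: ifP => hxp hin; exists (Ordinal hin); apply/eqP => /=.
  + by rewrite subnKC // modn_small.
  + by rewrite addnBA ?addKn ?modnDr ?modn_small //; lia.
Qed.

Variables (s : 'I_N -> 'I_N) (r : nat).
Hypotheses (s_inj : injective s) (r_le : r <= N).

Lemma mem_interval x q : (s q \in interval s r x) = in_window N r x q.
Proof. by rewrite intervalE mem_imset // mem_window. Qed.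

Lemma interval_exchange x (a b : 'I_N) :
  interval (exchange s a b) r x = s @: (tperm a b @^-1: window r x).
Proof.
rewrite intervalE -(can_imset_pre _ (tpermK a b)) -imset_comp.
exact: eq_imset (exchange_tperm s a b).
Qed.

Lemma mem_interval_exchange x (a b : 'I_N) q :
  (s q \in interval (exchange s a b) r x) = in_window N r x (tperm a b q).
Proof. by rewrite interval_exchange mem_imset // inE mem_window. Qed.

Lemma interval_exchange_inner x (a b : 'I_N) :
  a \in window r x -> b \in window r x ->
  interval (exchange s a b) r x = interval s r x.
Proof.
move=> aW bW; rewrite interval_exchange intervalE.
suff -> : tperm a b @^-1: window r x = window r x by [].
by apply/setP => p; rewrite inE; case: tpermP => [-> | -> | //]; rewrite aW bW.
Qed.

Lemma card_restrict_le (F : {set {set 'I_N}}) :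
  #|restrict F s r| <= #|[set x | interval s r x \in F]|.
Proof.
apply: leq_trans (leq_imset_card (interval s r) _); apply/subset_leq_card/subsetP.
move=> A; rewrite inE => /andP [AF /existsP [x /eqP defA]].
by apply/imsetP; exists x; rewrite // inE -defA.
Qed.

Lemma mem_intervals_through_last (F : {set {set 'I_N}}) (z : 'I_N) :
  val z = N.-1 -> #|restrict F s r| = r ->
  (forall A, A \in restrict F s r -> s z \in A) ->
  forall x : 'I_N, N - r <= x -> interval s r x \in F.
Proof.
move=> hz card_r through_z x hx.
have r_gt0 : 0 < r by move: hx; have := ltn_ord x; lia.
have last_in y : (s z \in interval s r y) = (N - r <= y).
  by rewrite mem_interval hz in_window_last ?ltn_ord.
set X := [set y : 'I_N | N - r <= y].
have sub : restrict F s r \subset interval s r @: X.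
  apply/subsetP => A A_r; have := through_z A A_r.
  move: A_r; rewrite inE => /andP [_ /existsP [y /eqP ->]].
  by rewrite last_in => hy; apply/imsetP; exists y; rewrite ?inE.
have eqX : restrict F s r = interval s r @: X.
  apply/eqP; rewrite eqEcard sub card_r.
  by rewrite (leq_trans (leq_imset_card _ _)) // card_ord_geq; lia.
have : interval s r x \in restrict F s r by rewrite eqX imset_f // inE.
by rewrite inE => /andP [].
Qed.
End Intervals.

Section Exchange.
Variable n : nat.
Local Notation N := (2 * n).
Variables (k r m : nat) (F : {set {set 'I_N}}) (sigma : 'I_N -> 'I_N) (a b z : 'I_N).
Hypotheses (sigma_inj : injective sigma) (rmN : r + m = N) (m_lt_n : m < n)
  (r_lt : r < (k - 1) * m) (a_val : a = n.-2 :> nat) (b_val : b = N.-2 :> nat)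
  (z_val : z = N.-1 :> nat) (card_sigma : #|restrict F sigma r| = r)
  (through_z : forall A, A \in restrict F sigma r -> sigma z \in A).
Local Notation mu := (exchange sigma a b).

Let r_le : r <= N. Proof. lia. Qed.
Let m_gt0 : 0 < m. Proof. by move: r_lt; case: posnP => [-> | //]; rewrite muln0. Qed.

Lemma intervals_through_last (x : 'I_N) : m <= x -> interval sigma r x \in F.
Proof.
by move=> mx; apply: (mem_intervals_through_last sigma_inj r_le z_val card_sigma through_z); lia.
Qed.

Definition coblock (c : nat) : {set 'I_N} := sigma @: [set p : 'I_N | ~~ (c <= p < c + m)].

Lemma mem_coblock c q : (sigma q \in coblock c) = ~~ (c <= q < c + m).
Proof. by rewrite mem_imset // inE. Qed.

Lemma coblock_mem c : c < r -> coblock c \in F.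
Proof.
move=> cr; have cmN : c + m < N by lia.
have win_c : window r (Ordinal cmN) = [set p : 'I_N | ~~ (c <= p < c + m)].
  by apply/setP => p; rewrite mem_window // inE in_window_wrap.
have <- : interval sigma r (Ordinal cmN) = coblock c by rewrite intervalE win_c.
by apply: intervals_through_last => /=; lia.
Qed.

(* The k members are the mu-intervals at x1 and h, whose complements contain
   the two exchanged positions and [0, x1), [h - m, h), [x1 + r, 2n), together
   with Q coblocks at x1, x1 + m, ... covering [x1, h - m) and k - 2 - Q
   coblocks at h, h + m, ... covering [h, x1 + r). *)
Lemma exchange_cover_false (x1 h : 'I_N) e Q :
  kwise_intersecting k F -> interval mu r x1 \in F -> x1.+2 <= m ->
  interval mu r h \in F -> n.-1 <= h < n.-1 + m -> e <= 1 -> h + e = x1 + Q.+1 * m ->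
  False.
Proof.
move=> Fk x1F x1m hF h_win e_le hQ; rewrite [Q.+1 * m]mulSn in hQ.
have Q_lt : Q < k - 1 by rewrite -(ltn_pmul2r m_gt0); lia.
have Q_fill : (k.-2 - Q) * m + Q * m + m = (k - 1) * m.
  by rewrite -mulnDl -mulSnr; congr (_ * _); lia.
pose cs1 := [seq minn (x1 + j * m) r.-1 | j <- iota 0 Q].
pose cs2 := [seq minn (h + j * m) r.-1 | j <- iota 0 (k.-2 - Q)].
pose As := [:: interval mu r x1, interval mu r h & [seq coblock c | c <- cs1 ++ cs2]].
have [v] : exists v, all (fun A : {set 'I_N} => v \in A) As.
  apply: (kwise_intersecting_seq Fk).
    by rewrite /= size_map size_cat !size_map !size_iota; lia.
  move=> A; rewrite !inE => /or3P [/eqP -> | /eqP -> | /mapP [c c_in ->]] //.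
  apply: coblock_mem; move: c_in; rewrite mem_cat => /orP [] /mapP [j _ ->]; lia.
have [sinv _ sinvK] := injF_bij sigma_inj.
rewrite -(sinvK v); set q := sinv v.
rewrite /= all_map => /and3P [in1 in2 /allP in_coblocks].
have miss : ~~ has (fun c => c <= q < c + m) (cs1 ++ cs2).
  by apply/hasPn => c /in_coblocks; rewrite /= mem_coblock.
have tq_lt := ltn_ord (tperm a b q).
move: in1 in2; rewrite !mem_interval_exchange // in_window_nowrap; try lia.
have -> : (h : nat) = (h - m) + m by lia.
rewrite in_window_wrap; try lia.
case: tpermP => [_ | _ | _ _]; rewrite ?a_val ?b_val; try lia.
move=> in1 in2; move: miss; rewrite has_cat negb_or => /andP [/negP miss1 /negP miss2].
case: (ltnP q (h - m)) => qh; [apply: miss1 | apply: miss2]; apply: block_cover; lia.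
Qed.

Lemma exchange_start_pred_notin (y : 'I_N) : y = m.-1 :> nat -> interval mu r y \notin F.
Proof.
move=> y_val; apply/negP => yF.
have win_y (p : 'I_N) : (p \in window r y) = (m.-1 <= p < N.-1).
  by rewrite mem_window // in_window_nowrap ?y_val //; lia.
have a_in : a \in window r y by rewrite win_y a_val; lia.
have b_in : b \in window r y by rewrite win_y b_val; lia.
rewrite (interval_exchange_inner _ a_in b_in) in yF.
have /through_z : interval sigma r y \in restrict F sigma r.
  by rewrite inE yF; apply/existsP; exists y.
by rewrite mem_interval // in_window_nowrap ?y_val ?z_val //; lia.
Qed.

Lemma exchange_starts_ge (x : 'I_N) :
  kwise_intersecting k F -> #|restrict F mu r| = r -> interval mu r x \in F -> m <= x.
Proof.
move=> Fk card_mu xF; rewrite leqNgt; apply/negP => xm.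
set S := [set y : 'I_N | interval mu r y \in F].
have notS (y : 'I_N) : y = m.-1 :> nat -> y \notin S.
  by move/exchange_start_pred_notin; rewrite inE.
have card_S : N <= #|S| + m by rewrite -[leqLHS]rmN leq_add2r -{1}card_mu card_restrict_le.
have x_S : x \in S by rewrite inE.
have m_h0 : m <= n.-1 by lia.
have h0_N : n.-1 + m <= N by lia.
have [l [h [lS lm hS h_win aligned]]] :=
  aligned_pair m_h0 h0_N card_S notS (ex_intro2 _ _ x x_S xm).
have m_h : m <= h by lia.
have [e e_le [Q hQ]] := aligned_decomp lm m_h aligned.
have l_ne : (l : nat) != m.-1 by apply/eqP => /notS; rewrite lS.
rewrite !inE in lS hS; apply: (exchange_cover_false Fk lS _ hS h_win e_le hQ); lia.
Qed.
End Exchange.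

Theorem lemma3p2 (k n r : nat) (hk : 2 <= k) (hn : 0 < n) (hr : 0 < r)
  (hnr : n < r) (hrk : r * k < (k - 1) * (2 * n))
  (F : {set {set 'I_(2 * n)}}) (hF : F \subset Hr r n)
  (hFk : kwise_intersecting k F)
  (sigma : 'I_(2 * n) -> 'I_(2 * n)) (hsigma : good_cyclic sigma)
  (z : 'I_(2 * n)) (hz : val z = (2 * n).-1)
  (hFs : #|restrict F sigma r| = r)
  (hFs2 : forall A, A \in restrict F sigma r -> sigma z \in A) :
  #|restrict F (exchange sigma n.-2 (2 * n).-2) r| = r ->
  forall A, A \in restrict F (exchange sigma n.-2 (2 * n).-2) r -> sigma z \in A.
Proof.
move=> card_mu A; rewrite inE => /andP [AF /existsP [x /eqP defA]]; subst A.
have [sigma_inj _] := hsigma.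
set m := 2 * n - r.
have rmN : r + m = 2 * n by rewrite subnKC //; nia.
have m_lt_n : m < n by lia.
have r_lt_km : r < (k - 1) * m by nia.
have a_lt : n.-2 < 2 * n by lia.
have b_lt : (2 * n).-2 < 2 * n by lia.
pose a := Ordinal a_lt; pose b := Ordinal b_lt.
have m_le_x : m <= x := exchange_starts_ge (a := a) (b := b) sigma_inj rmN m_lt_n r_lt_km
  erefl erefl hz hFs hFs2 hFk card_mu AF.
have z_fixed : tperm a b z = z by rewrite tpermD // -val_eqE /= hz; lia.
rewrite -[n.-2]/(nat_of_ord a) -[(2 * n).-2]/(nat_of_ord b) mem_interval_exchange //; last lia.
by rewrite z_fixed hz in_window_last.
Qed.
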